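(* Let $\mathbf{F}$ be a flat strong quasi-MV* algebra. Then $x\oplus y=0$ for all $x,y\in F$.
   Context: A quasi-MV* algebra is an algebra $\langle A;\oplus,-,{}^{+},{}^{-},0,1\rangle$ of type $\langle 2,1,1,1,0,0\rangle$ (${}^+,{}^-$ bind more tightly than $-$, which binds more tightly than $\oplus$; $-1$ denotes $-(1)$) such that for all $x,y,z$: (1) $x\oplus y=y\oplus x$; (2) $(1\oplus x)\oplus(y\oplus(1\oplus z))=((1\oplus x)\oplus y)\oplus(1\oplus z)$; (3) $(x\oplus 1)\oplus 1=1$; (4) $(x\oplus y)\oplus 0=x\oplus y$; (5) $x^{+}\oplus 0=(x\oplus 0)^{+}=1\oplus(-1\oplus x)$ and $x^{-}\oplus 0=(x\oplus 0)^{-}=-1\oplus(1\oplus x)$; (6) $x\oplus y=(x^{+}\oplus y^{+})\oplus(x^{-}\oplus y^{-})$; (7) $0=-0$; (8) $x\oplus(-x)=0$; (9) $-(x\oplus y)=(-x)\oplus(-y)$; (10) $-(-x)=x$; (11) $(-x\oplus(x\oplus y))^{+}=-x^{+}\oplus(x^{+}\oplus y^{+})$; (12) $x\vee y=y\vee x$; (13) $x\vee(y\vee z)=(x\vee y)\vee z$; (14) $x\oplus(y\vee z)=(x\oplus y)\vee(x\oplus z)$; where $x\vee y:=(x^{+}\oplus(-x^{+}\oplus y^{+})^{+})\oplus(x^{-}\oplus(-x^{-}\oplus y^{-})^{+})$. A strong quasi-MV* algebra is a quasi-MV* algebra satisfying $x^+=x^+\oplus 0$ and $x^-=x^-\oplus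 0$ for all $x$; it is flat if $0=1$. *)

Section QMVStar.
Variable A : Type.
Variables (oplus : A -> A -> A) (neg pl mi : A -> A) (zero one : A).

Local Notation "x ⊕ y" := (oplus x y) (at level 50, left associativity).

Definition qjoin (x y : A) : A :=
  (pl x ⊕ pl (neg (pl x) ⊕ pl y)) ⊕ (mi x ⊕ pl (neg (mi x) ⊕ mi y)).

Definition is_quasi_mvstar : Prop :=
  (forall x y, x ⊕ y = y ⊕ x) /\
  (forall x y z, (one ⊕ x) ⊕ (y ⊕ (one ⊕ z)) = ((one ⊕ x) ⊕ y) ⊕ (one ⊕ z)) /\
  (forall x, (x ⊕ one) ⊕ one = one) /\
  (forall x y, (x ⊕ y) ⊕ zero = x ⊕ y) /\
  (forall x, pl x ⊕ zero = pl (x ⊕ zero) /\ pl (x ⊕ zero) = one ⊕ (neg one ⊕ x)) /\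
  (forall x, mi x ⊕ zero = mi (x ⊕ zero) /\ mi (x ⊕ zero) = neg one ⊕ (one ⊕ x)) /\
  (forall x y, x ⊕ y = (pl x ⊕ pl y) ⊕ (mi x ⊕ mi y)) /\
  (zero = neg zero) /\
  (forall x, x ⊕ neg x = zero) /\
  (forall x y, neg (x ⊕ y) = neg x ⊕ neg y) /\
  (forall x, neg (neg x) = x) /\
  (forall x y, pl (neg x ⊕ (x ⊕ y)) = neg (pl x) ⊕ (pl x ⊕ pl y)) /\
  (forall x y, qjoin x y = qjoin y x) /\
  (forall x y z, qjoin x (qjoin y z) = qjoin (qjoin x y) z) /\
  (forall x y z, x ⊕ qjoin y z = qjoin (x ⊕ y) (x ⊕ z)).

Definition is_strong_quasi_mvstar : Prop :=
  is_quasi_mvstar /\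
  (forall x, pl x = pl x ⊕ zero) /\
  (forall x, mi x = mi x ⊕ zero).

Definition is_flat : Prop := zero = one.

End QMVStar.


Section FlatQuasiMVStar.

Variable A : Type.
Variables (oplus : A -> A -> A) (neg pl mi : A -> A) (zero one : A).

Local Notation "x ⊕ y" := (oplus x y) (at level 50, left associativity).

Hypothesis qmv : is_quasi_mvstar A oplus neg pl mi zero one.
Hypothesis flat : is_flat A zero one.

Lemma oplus_zero_flat (x : A) : x ⊕ zero = zero.
Proof.
  destruct qmv as (_ & _ & oplus_one_one & oplus_sum_zero & _).
  rewrite <- (oplus_sum_zero x zero).
  rewrite flat.
  apply oplus_one_one.
Qed.

Lemma oplus_flat (x y : A) : x ⊕ y = zero.
Proof.
  destruct qmv as (_ & _ & _ & oplus_sum_zero & _).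
  rewrite <- oplus_sum_zero.
  apply oplus_zero_flat.
Qed.

End FlatQuasiMVStar.

Theorem lemma3p1 (A : Type) (oplus : A -> A -> A) (neg pl mi : A -> A)
  (zero one : A) :
  is_strong_quasi_mvstar A oplus neg pl mi zero one ->
  is_flat A zero one ->
  forall x y : A, oplus x y = zero.
Proof.
  intros [qmv _] flat x y.
  exact (oplus_flat A oplus neg pl mi zero one qmv flat x y).
Qed.
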